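(* Let $u$ be a smooth absolute $E_1$-minimizer on a domain of the $xy$-plane where $D\neq0$. Then $$-\alpha\,N(H)-\alpha H^2+2\alpha^2N(\theta)+\tfrac23H\,N^{\perp}N^{\perp}\theta+N^{\perp}N^{\perp}\alpha=-2\alpha\,N^{\perp}(\alpha).$$
   Context: Heisenberg group $H_1$ with contact form $\Theta=dt+x\,dy-y\,dx$; graph $t=u(x,y)$, $D=[(u_x-y)^2+(u_y+x)^2]^{1/2}$, $\cos\theta=(u_x-y)/D$, $\sin\theta=(u_y+x)/D$, $\alpha=-1/D$, $H=D^{-3}\{(u_y+x)^2u_{xx}-2(u_y+x)(u_x-y)u_{xy}+(u_x-y)^2u_{yy}\}$ (the $p$-mean curvature), $N^{\perp}=\sin\theta\,\partial_x-\cos\theta\,\partial_y$, $N=\cos\theta\,\partial_x+\sin\theta\,\partial_y$. Absolute $E_1$-minimizer: $-N^{\perp}\alpha+\frac12\alpha^2+\frac16H^2=0$ on the nonsingular domain. *)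

From Stdlib Require Import Reals.
From Coquelicot Require Import Coquelicot.
Open Scope R_scope.

Definition dx (f : R -> R -> R) : R -> R -> R :=
  fun x y => Derive (fun t => f t y) x.
Definition dy (f : R -> R -> R) : R -> R -> R :=
  fun x y => Derive (fun t => f x t) y.

Definition open2 (O : R -> R -> Prop) : Prop :=
  forall x y, O x y -> exists eps : R, 0 < eps /\
    forall x' y', Rabs (x' - x) < eps -> Rabs (y' - y) < eps -> O x' y'.

Fixpoint Ck (k : nat) (O : R -> R -> Prop) (f : R -> R -> R) : Prop :=
  match k with
  | O => forall x y, O x y -> continuity_2d_pt f x y
  | S m =>
      (forall x y, O x y ->
         ex_derive (fun t => f t y) x /\ ex_derive (fun t => f x t) y)
      /\ Ck m O f /\ Ck m O (dx f) /\ Ck m O (dy f)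
  end.

Definition smooth_on (O : R -> R -> Prop) (f : R -> R -> R) : Prop :=
  forall k, Ck k O f.

(* Quantities attached to the graph t = u(x,y) in H_1 *)
Definition Dfun (u : R -> R -> R) : R -> R -> R :=
  fun x y => sqrt ((dx u x y - y) ^ 2 + (dy u x y + x) ^ 2).

Definition cosT (u : R -> R -> R) : R -> R -> R :=
  fun x y => (dx u x y - y) / Dfun u x y.
Definition sinT (u : R -> R -> R) : R -> R -> R :=
  fun x y => (dy u x y + x) / Dfun u x y.

Definition alpha (u : R -> R -> R) : R -> R -> R :=
  fun x y => - 1 / Dfun u x y.

Definition Hcurv (u : R -> R -> R) : R -> R -> R :=
  fun x y =>
    / (Dfun u x y ^ 3) *
    ((dy u x y + x) ^ 2 * dx (dx u) x y
     - 2 * (dy u x y + x) * (dx u x y - y) * dx (dy u) x y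
     + (dx u x y - y) ^ 2 * dy (dy u) x y).

Definition Nvf (u : R -> R -> R) (f : R -> R -> R) : R -> R -> R :=
  fun x y => cosT u x y * dx f x y + sinT u x y * dy f x y.
Definition Nperp (u : R -> R -> R) (f : R -> R -> R) : R -> R -> R :=
  fun x y => sinT u x y * dx f x y - cosT u x y * dy f x y.

Definition E1_minimizer_eq (O : R -> R -> Prop) (u : R -> R -> R) : Prop :=
  forall x y, O x y ->
    - Nperp u (alpha u) x y + / 2 * (alpha u x y) ^ 2
      + / 6 * (Hcurv u x y) ^ 2 = 0.

From Stdlib Require Import Reals Lra.
From Coquelicot Require Import Coquelicot.
Open Scope R_scope.

(* Write (u_x - y, u_y + x) = D (cos θ, sin θ). Differentiating this and using
   u_xy = u_yx gives the structure equations H = - N^⊥θ and N^⊥D = 2 - D Nθ,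
   i.e. N^⊥α = 2α² + α Nθ. Applying N^⊥ both to this identity and to the E_1
   equation N^⊥α = α²/2 + H²/6, and trading N^⊥N for N N^⊥ through the bracket
   [N^⊥, N] = - (N^⊥θ) N^⊥ - (Nθ) N, the two expressions for N^⊥N^⊥α combine
   into the stated identity. *)

Definition ex_partials (f : R -> R -> R) (x y : R) : Prop :=
  ex_derive (fun t => f t y) x /\ ex_derive (fun t => f x t) y.

Lemma open2_locally_x U x y : open2 U -> U x y -> locally x (fun t => U t y).
Proof.
  intros HU Hxy. destruct (HU x y Hxy) as [e [He HUe]].
  exists (mkposreal e He). intros t Ht. apply HUe; [exact Ht|].
  rewrite Rminus_eq_0, Rabs_R0; exact He.
Qed.

Lemma open2_locally_y U x y : open2 U -> U x y -> locally y (fun t => U x t).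
Proof.
  intros HU Hxy. destruct (HU x y Hxy) as [e [He HUe]].
  exists (mkposreal e He). intros t Ht. apply HUe; [|exact Ht].
  rewrite Rminus_eq_0, Rabs_R0; exact He.
Qed.

Section OpenSetLocality.

Variables (U : R -> R -> Prop) (f g : R -> R -> R).
Hypothesis HU : open2 U.
Hypothesis Hfg : forall a b, U a b -> f a b = g a b.

Lemma dx_ext_open x y : U x y -> dx f x y = dx g x y.
Proof.
  intros Hxy. apply Derive_ext_loc.
  eapply filter_imp; [|exact (open2_locally_x U x y HU Hxy)].
  intros t Ht. exact (Hfg t y Ht).
Qed.

Lemma dy_ext_open x y : U x y -> dy f x y = dy g x y.
Proof.
  intros Hxy. apply Derive_ext_loc.
  eapply filter_imp; [|exact (open2_locally_y U x y HU Hxy)].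
  intros t Ht. exact (Hfg x t Ht).
Qed.

Lemma ex_partials_ext_open x y : U x y -> ex_partials g x y -> ex_partials f x y.
Proof.
  intros Hxy [Hgx Hgy]. split.
  - apply (ex_derive_ext_loc (fun t => g t y)); [|exact Hgx].
    eapply filter_imp; [|exact (open2_locally_x U x y HU Hxy)].
    intros t Ht. symmetry. exact (Hfg t y Ht).
  - apply (ex_derive_ext_loc (fun t => g x t)); [|exact Hgy].
    eapply filter_imp; [|exact (open2_locally_y U x y HU Hxy)].
    intros t Ht. symmetry. exact (Hfg x t Ht).
Qed.

Lemma Nperp_ext_open u x y : U x y -> Nperp u f x y = Nperp u g x y.
Proof. intros Hxy. unfold Nperp. now rewrite dx_ext_open, dy_ext_open. Qed.

Lemma Nvf_ext_open u x y : U x y -> Nvf u f x y = Nvf u g x y.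
Proof. intros Hxy. unfold Nvf. now rewrite dx_ext_open, dy_ext_open. Qed.

End OpenSetLocality.

Section PartialsAlgebra.

Variables (f g : R -> R -> R) (x y : R).
Hypothesis Hf : ex_partials f x y.
Hypothesis Hg : ex_partials g x y.

Lemma ex_partials_mult : ex_partials (fun a b => f a b * g a b) x y.
Proof. destruct Hf, Hg. split; auto_derive; tauto. Qed.

Lemma ex_partials_scal k : ex_partials (fun a b => k * f a b) x y.
Proof. destruct Hf. split; auto_derive; tauto. Qed.

Lemma dx_plus : dx (fun a b => f a b + g a b) x y = dx f x y + dx g x y.
Proof. destruct Hf, Hg. apply Derive_plus; assumption. Qed.

Lemma dy_plus : dy (fun a b => f a b + g a b) x y = dy f x y + dy g x y.
Proof. destruct Hf, Hg. apply Derive_plus; assumption. Qed.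

Lemma dx_mult : dx (fun a b => f a b * g a b) x y = dx f x y * g x y + f x y * dx g x y.
Proof. destruct Hf, Hg. apply Derive_mult; assumption. Qed.

Lemma dy_mult : dy (fun a b => f a b * g a b) x y = dy f x y * g x y + f x y * dy g x y.
Proof. destruct Hf, Hg. apply Derive_mult; assumption. Qed.

Lemma Nperp_plus u :
  Nperp u (fun a b => f a b + g a b) x y = Nperp u f x y + Nperp u g x y.
Proof. unfold Nperp. rewrite dx_plus, dy_plus. ring. Qed.

Lemma Nperp_mult u :
  Nperp u (fun a b => f a b * g a b) x y = Nperp u f x y * g x y + f x y * Nperp u g x y.
Proof. unfold Nperp. rewrite dx_mult, dy_mult. ring. Qed.

End PartialsAlgebra.

Lemma dx_scal f k x y : dx (fun a b => k * f a b) x y = k * dx f x y.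
Proof. apply Derive_scal. Qed.

Lemma dy_scal f k x y : dy (fun a b => k * f a b) x y = k * dy f x y.
Proof. apply Derive_scal. Qed.

Lemma Nperp_scal u f k x y : Nperp u (fun a b => k * f a b) x y = k * Nperp u f x y.
Proof. unfold Nperp. rewrite dx_scal, dy_scal. ring. Qed.

Lemma Nvf_scal u f k x y : Nvf u (fun a b => k * f a b) x y = k * Nvf u f x y.
Proof. unfold Nvf. rewrite dx_scal, dy_scal. ring. Qed.

Lemma Ck_sub k (O O' : R -> R -> Prop) f :
  (forall x y, O x y -> O' x y) -> Ck k O' f -> Ck k O f.
Proof.
  intros HO. revert f. induction k as [|k IH]; intros f Hf; simpl in *.
  - intros x y Hxy. exact (Hf x y (HO x y Hxy)).
  - destruct Hf as [Hd [H0 [Hx Hy]]].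
    split; [intros x y Hxy; exact (Hd x y (HO x y Hxy))|].
    exact (conj (IH f H0) (conj (IH (dx f) Hx) (IH (dy f) Hy))).
Qed.

Lemma smooth_on_sub (O O' : R -> R -> Prop) f :
  (forall x y, O' x y -> O x y) -> smooth_on O f -> smooth_on O' f.
Proof. intros HO Hf k. exact (Ck_sub k O' O f HO (Hf k)). Qed.

Lemma smooth_on_dx O f : smooth_on O f -> smooth_on O (dx f).
Proof. intros Hf k. exact (proj1 (proj2 (proj2 (Hf (S k))))). Qed.

Lemma smooth_on_dy O f : smooth_on O f -> smooth_on O (dy f).
Proof. intros Hf k. exact (proj2 (proj2 (proj2 (Hf (S k))))). Qed.

Lemma smooth_on_ex_partials O f x y : smooth_on O f -> O x y -> ex_partials f x y.
Proof. intros Hf Hxy. exact (proj1 (Hf 1%nat) x y Hxy). Qed.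

Lemma smooth_on_dx_dy_sym O f x y :
  open2 O -> smooth_on O f -> O x y -> dx (dy f) x y = dy (dx f) x y.
Proof.
  intros HO Hf Hxy. apply Schwarz.
  - destruct (HO x y Hxy) as [e [He HOe]]. exists (mkposreal e He).
    intros a b Ha Hb. specialize (HOe a b Ha Hb).
    destruct (smooth_on_ex_partials O f a b Hf HOe).
    destruct (smooth_on_ex_partials O (dy f) a b (smooth_on_dy O f Hf) HOe).
    destruct (smooth_on_ex_partials O (dx f) a b (smooth_on_dx O f Hf) HOe).
    repeat split; assumption.
  - exact (smooth_on_dx O (dy f) (smooth_on_dy O f Hf) 0%nat x y Hxy).
  - exact (smooth_on_dy O (dx f) (smooth_on_dx O f Hf) 0%nat x y Hxy).
Qed.

Section HorizontalFrame.

Variables (u theta : R -> R -> R) (U : R -> R -> Prop).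
Hypothesis HU : open2 U.
Hypothesis Htheta : smooth_on U theta.
Hypothesis Hangle : forall x y, U x y ->
  cos (theta x y) = cosT u x y /\ sin (theta x y) = sinT u x y.

Lemma cosT_sqr_add_sinT_sqr x y : U x y -> cosT u x y ^ 2 + sinT u x y ^ 2 = 1.
Proof.
  intros Hxy. destruct (Hangle x y Hxy) as [<- <-].
  rewrite <- (sin2_cos2 (theta x y)). unfold Rsqr. ring.
Qed.

Lemma cosT_eq_cos a b : U a b -> cosT u a b = cos (theta a b).
Proof. intros Hab. symmetry. exact (proj1 (Hangle a b Hab)). Qed.

Lemma sinT_eq_sin a b : U a b -> sinT u a b = sin (theta a b).
Proof. intros Hab. symmetry. exact (proj2 (Hangle a b Hab)). Qed.

Lemma ex_partials_cosT x y : U x y -> ex_partials (cosT u) x y.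
Proof.
  intros Hxy. apply (ex_partials_ext_open U _ (fun a b => cos (theta a b)) HU cosT_eq_cos x y Hxy).
  destruct (smooth_on_ex_partials U theta x y Htheta Hxy). split; auto_derive; auto.
Qed.

Lemma ex_partials_sinT x y : U x y -> ex_partials (sinT u) x y.
Proof.
  intros Hxy. apply (ex_partials_ext_open U _ (fun a b => sin (theta a b)) HU sinT_eq_sin x y Hxy).
  destruct (smooth_on_ex_partials U theta x y Htheta Hxy). split; auto_derive; auto.
Qed.

Lemma dx_cosT x y : U x y -> dx (cosT u) x y = - sinT u x y * dx theta x y.
Proof.
  intros Hxy. rewrite (dx_ext_open U _ (fun a b => cos (theta a b)) HU cosT_eq_cos x y Hxy).
  destruct (smooth_on_ex_partials U theta x y Htheta Hxy) as [Hx _].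
  apply is_derive_unique. auto_derive; [exact Hx|].
  rewrite (sinT_eq_sin x y Hxy). unfold dx. ring.
Qed.

Lemma dy_cosT x y : U x y -> dy (cosT u) x y = - sinT u x y * dy theta x y.
Proof.
  intros Hxy. rewrite (dy_ext_open U _ (fun a b => cos (theta a b)) HU cosT_eq_cos x y Hxy).
  destruct (smooth_on_ex_partials U theta x y Htheta Hxy) as [_ Hy].
  apply is_derive_unique. auto_derive; [exact Hy|].
  rewrite (sinT_eq_sin x y Hxy). unfold dy. ring.
Qed.

Lemma dx_sinT x y : U x y -> dx (sinT u) x y = cosT u x y * dx theta x y.
Proof.
  intros Hxy. rewrite (dx_ext_open U _ (fun a b => sin (theta a b)) HU sinT_eq_sin x y Hxy).
  destruct (smooth_on_ex_partials U theta x y Htheta Hxy) as [Hx _].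
  apply is_derive_unique. auto_derive; [exact Hx|].
  rewrite (cosT_eq_cos x y Hxy). unfold dx. ring.
Qed.

Lemma dy_sinT x y : U x y -> dy (sinT u) x y = cosT u x y * dy theta x y.
Proof.
  intros Hxy. rewrite (dy_ext_open U _ (fun a b => sin (theta a b)) HU sinT_eq_sin x y Hxy).
  destruct (smooth_on_ex_partials U theta x y Htheta Hxy) as [_ Hy].
  apply is_derive_unique. auto_derive; [exact Hy|].
  rewrite (cosT_eq_cos x y Hxy). unfold dy. ring.
Qed.

Lemma ex_partials_Nperp f x y : smooth_on U f -> U x y -> ex_partials (Nperp u f) x y.
Proof.
  intros Hf Hxy.
  destruct (ex_partials_cosT x y Hxy), (ex_partials_sinT x y Hxy).
  destruct (smooth_on_ex_partials U (dx f) x y (smooth_on_dx U f Hf) Hxy).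
  destruct (smooth_on_ex_partials U (dy f) x y (smooth_on_dy U f Hf) Hxy).
  unfold Nperp. split; auto_derive; tauto.
Qed.

Lemma ex_partials_Nvf f x y : smooth_on U f -> U x y -> ex_partials (Nvf u f) x y.
Proof.
  intros Hf Hxy.
  destruct (ex_partials_cosT x y Hxy), (ex_partials_sinT x y Hxy).
  destruct (smooth_on_ex_partials U (dx f) x y (smooth_on_dx U f Hf) Hxy).
  destruct (smooth_on_ex_partials U (dy f) x y (smooth_on_dy U f Hf) Hxy).
  unfold Nvf. split; auto_derive; tauto.
Qed.

Lemma Nperp_Nvf_comm f x y : smooth_on U f -> U x y ->
  Nperp u (Nvf u f) x y =
  Nvf u (Nperp u f) x y - Nperp u theta x y * Nperp u f x y - Nvf u theta x y * Nvf u f x y.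
Proof.
  intros Hf Hxy.
  destruct (ex_partials_cosT x y Hxy) as [Ecx Ecy], (ex_partials_sinT x y Hxy) as [Esx Esy].
  destruct (smooth_on_ex_partials U (dx f) x y (smooth_on_dx U f Hf) Hxy).
  destruct (smooth_on_ex_partials U (dy f) x y (smooth_on_dy U f Hf) Hxy).
  assert (NNx : dx (Nvf u f) x y = dx (cosT u) x y * dx f x y + cosT u x y * dx (dx f) x y
                 + (dx (sinT u) x y * dy f x y + sinT u x y * dx (dy f) x y))
    by (apply is_derive_unique; unfold Nvf; auto_derive; [tauto | unfold dx, dy; ring]).
  assert (NNy : dy (Nvf u f) x y = dy (cosT u) x y * dx f x y + cosT u x y * dy (dx f) x y
                 + (dy (sinT u) x y * dy f x y + sinT u x y * dy (dy f) x y))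
    by (apply is_derive_unique; unfold Nvf; auto_derive; [tauto | unfold dx, dy; ring]).
  assert (NPx : dx (Nperp u f) x y = dx (sinT u) x y * dx f x y + sinT u x y * dx (dx f) x y
                 - (dx (cosT u) x y * dy f x y + cosT u x y * dx (dy f) x y))
    by (apply is_derive_unique; unfold Nperp; auto_derive; [tauto | unfold dx, dy; ring]).
  assert (NPy : dy (Nperp u f) x y = dy (sinT u) x y * dx f x y + sinT u x y * dy (dx f) x y
                 - (dy (cosT u) x y * dy f x y + cosT u x y * dy (dy f) x y))
    by (apply is_derive_unique; unfold Nperp; auto_derive; [tauto | unfold dx, dy; ring]).
  change (Nperp u (Nvf u f) x y)
    with (sinT u x y * dx (Nvf u f) x y - cosT u x y * dy (Nvf u f) x y).
  change (Nvf u (Nperp u f) x y)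
    with (cosT u x y * dx (Nperp u f) x y + sinT u x y * dy (Nperp u f) x y).
  rewrite NNx, NNy, NPx, NPy, dx_cosT, dy_cosT, dx_sinT, dy_sinT,
    (smooth_on_dx_dy_sym U f x y HU Hf Hxy) by exact Hxy.
  unfold Nperp, Nvf. ring.
Qed.

Hypothesis Hu : smooth_on U u.
Hypothesis HD : forall x y, U x y -> Dfun u x y <> 0.

Lemma dx_u_polar a b : U a b -> dx u a b - b = Dfun u a b * cosT u a b.
Proof. intros Hab. unfold cosT. field. exact (HD a b Hab). Qed.

Lemma dy_u_polar a b : U a b -> dy u a b + a = Dfun u a b * sinT u a b.
Proof. intros Hab. unfold sinT. field. exact (HD a b Hab). Qed.

Lemma ex_partials_Dfun x y : U x y -> ex_partials (Dfun u) x y.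
Proof.
  intros Hxy.
  assert (Hpos : 0 < (dx u x y - y) ^ 2 + (dy u x y + x) ^ 2).
  { assert (Hle : 0 <= (dx u x y - y) ^ 2 + (dy u x y + x) ^ 2)
      by (apply Rplus_le_le_0_compat; apply pow2_ge_0).
    destruct (Rle_lt_or_eq_dec _ _ Hle) as [Hlt|E]; [exact Hlt|].
    exfalso. apply (HD x y Hxy). unfold Dfun. rewrite <- E. exact sqrt_0. }
  destruct (smooth_on_ex_partials U (dx u) x y (smooth_on_dx U u Hu) Hxy).
  destruct (smooth_on_ex_partials U (dy u) x y (smooth_on_dy U u Hu) Hxy).
  unfold Dfun. split; auto_derive; tauto.
Qed.

Lemma dx_dx_u x y : U x y ->
  dx (dx u) x y = dx (Dfun u) x y * cosT u x y + Dfun u x y * dx (cosT u) x y.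
Proof.
  intros Hxy.
  rewrite <- dx_mult by auto using ex_partials_Dfun, ex_partials_cosT.
  rewrite <- (dx_ext_open U (fun a b => dx u a b - b) _ HU dx_u_polar x y Hxy).
  destruct (smooth_on_ex_partials U (dx u) x y (smooth_on_dx U u Hu) Hxy) as [Hx _].
  symmetry. apply is_derive_unique. auto_derive; [exact Hx | unfold dx; ring].
Qed.

Lemma dy_dx_u x y : U x y ->
  dy (dx u) x y - 1 = dy (Dfun u) x y * cosT u x y + Dfun u x y * dy (cosT u) x y.
Proof.
  intros Hxy.
  rewrite <- dy_mult by auto using ex_partials_Dfun, ex_partials_cosT.
  rewrite <- (dy_ext_open U (fun a b => dx u a b - b) _ HU dx_u_polar x y Hxy).
  destruct (smooth_on_ex_partials U (dx u) x y (smooth_on_dx U u Hu) Hxy) as [_ Hy].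
  symmetry. apply is_derive_unique. auto_derive; [exact Hy | unfold dy; ring].
Qed.

Lemma dx_dy_u x y : U x y ->
  dx (dy u) x y + 1 = dx (Dfun u) x y * sinT u x y + Dfun u x y * dx (sinT u) x y.
Proof.
  intros Hxy.
  rewrite <- dx_mult by auto using ex_partials_Dfun, ex_partials_sinT.
  rewrite <- (dx_ext_open U (fun a b => dy u a b + a) _ HU dy_u_polar x y Hxy).
  destruct (smooth_on_ex_partials U (dy u) x y (smooth_on_dy U u Hu) Hxy) as [Hx _].
  symmetry. apply is_derive_unique. auto_derive; [exact Hx | unfold dx; ring].
Qed.

Lemma dy_dy_u x y : U x y ->
  dy (dy u) x y = dy (Dfun u) x y * sinT u x y + Dfun u x y * dy (sinT u) x y.
Proof.
  intros Hxy.
  rewrite <- dy_mult by auto using ex_partials_Dfun, ex_partials_sinT.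
  rewrite <- (dy_ext_open U (fun a b => dy u a b + a) _ HU dy_u_polar x y Hxy).
  destruct (smooth_on_ex_partials U (dy u) x y (smooth_on_dy U u Hu) Hxy) as [_ Hy].
  symmetry. apply is_derive_unique. auto_derive; [exact Hy | unfold dy; ring].
Qed.

(* Subtracting the two mixed derivatives: the [+1] and [-1] coming from the
   contact form are all that survives of [u_xy = u_yx]. *)
Lemma Nperp_Dfun x y : U x y -> Nperp u (Dfun u) x y = 2 - Dfun u x y * Nvf u theta x y.
Proof.
  intros Hxy.
  pose proof (dy_dx_u x y Hxy) as Hyx. pose proof (dx_dy_u x y Hxy) as Hxy'.
  rewrite (smooth_on_dx_dy_sym U u x y HU Hu Hxy), dx_sinT in Hxy' by exact Hxy.
  rewrite dy_cosT in Hyx by exact Hxy.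
  unfold Nperp, Nvf. lra.
Qed.

Lemma Hcurv_polar x y : U x y -> Hcurv u x y = - Nperp u theta x y.
Proof.
  intros Hxy.
  pose proof (dy_dx_u x y Hxy) as Hyx. pose proof (dx_dy_u x y Hxy) as Hxy'.
  rewrite <- (smooth_on_dx_dy_sym U u x y HU Hu Hxy), dy_cosT in Hyx by exact Hxy.
  rewrite dx_sinT in Hxy' by exact Hxy.
  pose proof (cosT_sqr_add_sinT_sqr x y Hxy) as Hcs.
  pose proof (HD x y Hxy) as HDxy.
  unfold Hcurv, Nperp.
  rewrite (dx_u_polar x y Hxy), (dy_u_polar x y Hxy), dx_dx_u, dy_dy_u, dx_cosT, dy_sinT
    by exact Hxy.
  replace (dx (dy u) x y) with ((dx (Dfun u) x y * sinT u x y + dy (Dfun u) x y * cosT u x y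
     + Dfun u x y * (cosT u x y * dx theta x y - sinT u x y * dy theta x y)) / 2) by lra.
  transitivity (- (sinT u x y * dx theta x y - cosT u x y * dy theta x y)
                * (cosT u x y ^ 2 + sinT u x y ^ 2)).
  - field. exact HDxy.
  - rewrite Hcs. ring.
Qed.

Lemma ex_partials_alpha x y : U x y -> ex_partials (alpha u) x y.
Proof.
  intros Hxy. destruct (ex_partials_Dfun x y Hxy).
  pose proof (HD x y Hxy). unfold alpha. split; auto_derive; tauto.
Qed.

Lemma Nperp_alpha x y : U x y ->
  Nperp u (alpha u) x y = 2 * alpha u x y ^ 2 + alpha u x y * Nvf u theta x y.
Proof.
  intros Hxy. destruct (ex_partials_Dfun x y Hxy).
  pose proof (HD x y Hxy) as HDxy.
  assert (Hax : dx (alpha u) x y = dx (Dfun u) x y / Dfun u x y ^ 2)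
    by (apply is_derive_unique; unfold alpha; auto_derive; [tauto | unfold dx; field; exact HDxy]).
  assert (Hay : dy (alpha u) x y = dy (Dfun u) x y / Dfun u x y ^ 2)
    by (apply is_derive_unique; unfold alpha; auto_derive; [tauto | unfold dy; field; exact HDxy]).
  transitivity (Nperp u (Dfun u) x y / Dfun u x y ^ 2).
  - unfold Nperp at 1. rewrite Hax, Hay. unfold Nperp. field. exact HDxy.
  - rewrite Nperp_Dfun by exact Hxy. unfold alpha. field. exact HDxy.
Qed.

Lemma Hcurv_eq_scal_Nperp a b : U a b -> Hcurv u a b = -1 * Nperp u theta a b.
Proof. intros Hab. rewrite (Hcurv_polar a b Hab). ring. Qed.

Lemma ex_partials_Hcurv x y : U x y -> ex_partials (Hcurv u) x y.
Proof.
  intros Hxy. apply (ex_partials_ext_open U _ _ HU Hcurv_eq_scal_Nperp x y Hxy).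
  apply ex_partials_scal, ex_partials_Nperp; assumption.
Qed.

Lemma Nperp_Nperp_theta x y : U x y -> Nperp u (Nperp u theta) x y = - Nperp u (Hcurv u) x y.
Proof.
  intros Hxy. rewrite (Nperp_ext_open U _ _ HU Hcurv_eq_scal_Nperp u x y Hxy), Nperp_scal.
  ring.
Qed.

Lemma Nvf_Nperp_theta x y : U x y -> Nvf u (Nperp u theta) x y = - Nvf u (Hcurv u) x y.
Proof.
  intros Hxy. rewrite (Nvf_ext_open U _ _ HU Hcurv_eq_scal_Nperp u x y Hxy), Nvf_scal.
  ring.
Qed.

Lemma Nperp_Nperp_alpha x y : U x y ->
  Nperp u (Nperp u (alpha u)) x y =
  4 * alpha u x y * Nperp u (alpha u) x y + Nperp u (alpha u) x y * Nvf u theta x y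
  + alpha u x y * Nperp u (Nvf u theta) x y.
Proof.
  intros Hxy.
  assert (Ha : ex_partials (alpha u) x y) by exact (ex_partials_alpha x y Hxy).
  assert (HN : ex_partials (Nvf u theta) x y) by exact (ex_partials_Nvf theta x y Htheta Hxy).
  assert (Hpoly : forall a b, U a b -> Nperp u (alpha u) a b =
            2 * (alpha u a b * alpha u a b) + alpha u a b * Nvf u theta a b)
    by (intros a b Hab; rewrite (Nperp_alpha a b Hab); ring).
  rewrite (Nperp_ext_open U _ _ HU Hpoly u x y Hxy).
  pose proof (ex_partials_mult _ _ x y Ha Ha) as Haa.
  rewrite (Nperp_plus _ _ x y (ex_partials_scal _ x y Haa 2) (ex_partials_mult _ _ x y Ha HN)).
  rewrite Nperp_scal, (Nperp_mult _ _ x y Ha Ha), (Nperp_mult _ _ x y Ha HN).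
  ring.
Qed.

Lemma Nperp_Nperp_alpha_E1 x y :
  (forall a b, U a b -> Nperp u (alpha u) a b = / 2 * alpha u a b ^ 2 + / 6 * Hcurv u a b ^ 2) ->
  U x y ->
  Nperp u (Nperp u (alpha u)) x y =
  alpha u x y * Nperp u (alpha u) x y + / 3 * Hcurv u x y * Nperp u (Hcurv u) x y.
Proof.
  intros HE Hxy.
  assert (Ha : ex_partials (alpha u) x y) by exact (ex_partials_alpha x y Hxy).
  assert (HH : ex_partials (Hcurv u) x y) by exact (ex_partials_Hcurv x y Hxy).
  assert (Hpoly : forall a b, U a b -> Nperp u (alpha u) a b =
            / 2 * (alpha u a b * alpha u a b) + / 6 * (Hcurv u a b * Hcurv u a b))
    by (intros a b Hab; rewrite (HE a b Hab); ring).
  rewrite (Nperp_ext_open U _ _ HU Hpoly u x y Hxy).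
  pose proof (ex_partials_mult _ _ x y Ha Ha) as Haa.
  pose proof (ex_partials_mult _ _ x y HH HH) as HHH.
  rewrite (Nperp_plus _ _ x y (ex_partials_scal _ x y Haa (/ 2)) (ex_partials_scal _ x y HHH (/ 6))).
  rewrite !Nperp_scal, (Nperp_mult _ _ x y Ha Ha), (Nperp_mult _ _ x y HH HH).
  field.
Qed.

End HorizontalFrame.

Theorem proposition3p2 :
  forall (Omega : R -> R -> Prop) (u : R -> R -> R),
    open2 Omega ->
    smooth_on Omega u ->
    (forall x y, Omega x y -> Dfun u x y <> 0) ->
    E1_minimizer_eq Omega u ->
    (* θ: any smooth local determination of the angle on an open U ⊆ Omega *)
    forall (U : R -> R -> Prop) (theta : R -> R -> R),
      open2 U ->
      (forall x y, U x y -> Omega x y) ->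
      smooth_on U theta ->
      (forall x y, U x y ->
         cos (theta x y) = cosT u x y /\ sin (theta x y) = sinT u x y) ->
      forall x y, U x y ->
        - alpha u x y * Nvf u (Hcurv u) x y
        - alpha u x y * (Hcurv u x y) ^ 2
        + 2 * (alpha u x y) ^ 2 * Nvf u theta x y
        + 2 / 3 * Hcurv u x y * Nperp u (Nperp u theta) x y
        + Nperp u (Nperp u (alpha u)) x y
        = - 2 * alpha u x y * Nperp u (alpha u) x y.
Proof.
  intros Omega u HO Hu HD HE U theta HU HUO Htheta Hangle x y Hxy.
  pose proof (smooth_on_sub Omega U u HUO Hu) as HuU.
  assert (HDU : forall a b, U a b -> Dfun u a b <> 0) by auto.
  assert (HEU : forall a b, U a b ->
            Nperp u (alpha u) a b = / 2 * alpha u a b ^ 2 + / 6 * Hcurv u a b ^ 2)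
    by (intros a b Hab; pose proof (HE a b (HUO a b Hab)); lra).
  pose proof (Nperp_Nperp_alpha_E1 u theta U HU Htheta Hangle HuU HDU x y HEU Hxy) as HPPa_E1.
  pose proof (Nperp_Nperp_alpha u theta U HU Htheta Hangle HuU HDU x y Hxy) as HPPa.
  pose proof (Nperp_Nvf_comm u theta U HU Htheta Hangle theta x y Htheta Hxy) as Hbracket.
  rewrite (Nvf_Nperp_theta u theta U HU Htheta Hangle HuU HDU x y Hxy) in Hbracket.
  rewrite (Nperp_Nperp_theta u theta U HU Htheta Hangle HuU HDU x y Hxy).
  pose proof (Hcurv_polar u theta U HU Htheta Hangle HuU HDU x y Hxy) as HP.
  pose proof (Nperp_alpha u theta U HU Htheta Hangle HuU HDU x y Hxy) as HPa.
  rewrite Hbracket in HPPa. rewrite HPa in HPPa_E1, HPPa |- *.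
  replace (Nperp u theta x y) with (- Hcurv u x y) in HPPa by lra.
  lra.
Qed.
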